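(* Let $\beta\in(-2,-1)$, $c\in(0,1)$, and let $n\geq 3$ be an integer with $n>\frac{\beta}{c-1}$. Let $x_{1,n}<x_{2,n}<\dots<x_{n,n}$ denote the zeros of the monic Meixner polynomial $M_n(x;\beta,c)$. Then $$0<x_{1,n}<-\beta-1<x_{2,n}<1<-\beta<2<x_{3,n}.$$
   Context: Monic Meixner polynomials are defined by $$M_n(x;\beta,c)=\left(\frac{c}{c-1}\right)^n(\beta)_n\sum_{k=0}^{n}\frac{(-n)_k(-x)_k(1-\frac1c)^k}{(\beta)_k\,k!},$$ for real $\beta,c$ with $c\neq 0$ and $\beta\notin\{-1,-2,\dots,-n+1\}$, where $(\alpha)_0=1$ and $(\alpha)_k=\alpha(\alpha+1)\cdots(\alpha+k-1)$ for $k\geq1$. It is known that for $\beta\in(-2,-1)$, $c\in(0,1)$, $n\ge3$ and $n>\frac{\beta}{c-1}$, all zeros of $M_n(x;\beta,c)$ are real, simple and positive. *)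

From mathcomp Require Import all_boot all_order all_algebra.
From mathcomp Require Import reals.
Set Implicit Arguments. Unset Strict Implicit. Unset Printing Implicit Defensive.
Import Order.TTheory GRing.Theory Num.Theory.
Local Open Scope ring_scope.

Definition poch {R : pzRingType} (a : R) (k : nat) : R :=
  \prod_(i < k) (a + i%:R).

Definition meixner {R : realType} (n : nat) (beta c x : R) : R :=
  (c / (c - 1)) ^+ n * poch beta n *
  \sum_(k < n.+1)
     (poch (- (n%:R)) k * poch (- x) k * (1 - c^-1) ^+ k)
       / (poch beta k * (k`!)%:R).

From mathcomp Require Import all_boot all_order all_algebra reals.
From mathcomp Require Import boolp functions topology normedtype sequences.
From mathcomp Require Import ring lra zify.
Set Implicit Arguments. Unset Strict Implicit. Unset Printing Implicit Defensive.
Import Order.TTheory GRing.Theory Num.Theory numFieldNormedType.Exports.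
Local Open Scope ring_scope.
Local Open Scope classical_set_scope.

(* Write M_n = (c/(c-1))^n (β)_n F with
   F(y) = Σ_k C(n,k) ((1-c)/c)^k (-y)_k / (β)_k, so that Π_i (x_i - y) = K F(y) with K > 0.
   Keeping the first three terms of F (the others are nonnegative there) shows F > 0 on
   (-∞, 0] and on [1, 2]; summing binomial series shows F(-β-1) < 0 exactly when
   n > β/(c-1).  F is orthogonal to the polynomials of degree < n for the weight
   w(m) = (β)_m c^m / m! on ℕ, which is negative only at m = 1.  If three zeros lay in
   (0, 1), the moment of F against (y - 1) Π_{i ≥ 3} (x_i - y) would be a series of
   nonpositive terms with a negative first term whose partial sums tend to 0.  The sign of
   Π_i (x_i - y) at y = -β-1 and y = 1 then counts the zeros below these points. *)

Lemma poch0 (R : pzRingType) (a : R) : poch a 0 = 1.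
Proof. by rewrite /poch big_ord0. Qed.

Lemma pochS (R : pzRingType) (a : R) k : poch a k.+1 = poch a k * (a + k%:R).
Proof. by rewrite /poch big_ord_recr. Qed.

Lemma pochSl (R : pzRingType) (a : R) k : poch a k.+1 = a * poch (a + 1) k.
Proof.
rewrite /poch big_ord_recl addr0; congr (_ * _); apply: eq_bigr => i _.
by rewrite /bump /= natrD addrA.
Qed.

Lemma pochD (R : pzRingType) (a : R) m k :
  poch a (m + k) = poch a m * poch (a + m%:R) k.
Proof.
elim: k => [|k IHk]; first by rewrite addn0 poch0 mulr1.
by rewrite addnS !pochS IHk natrD addrA mulrA.
Qed.

Lemma poch_oppn (R : comRingType) n k :
  poch (- n%:R : R) k = (-1) ^+ k * (n ^_ k)%:R.
Proof.
elim: k => [|k IHk]; first by rewrite poch0 mulr1.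
rewrite pochS IHk ffactnSr natrM exprS.
have [lekn | ltnk] := leqP k n.
  by rewrite natrB //; move: (n%:R : R) (k%:R : R) => N K; ring.
by rewrite ffact_small // !(mul0r, mulr0).
Qed.

Lemma poch_ge0 (R : numDomainType) (a : R) k : 0 <= a -> 0 <= poch a k.
Proof. by move=> a0; apply: prodr_ge0 => i _; apply: addr_ge0. Qed.

Lemma poch_gt0 (R : numDomainType) (a : R) k : 0 < a -> 0 < poch a k.
Proof. by move=> a0; apply: prodr_gt0 => i _; apply: ltr_wpDr. Qed.

Lemma sum_head3_le (R : numDomainType) (F : nat -> R) m : (2 <= m)%N ->
  (forall k, (3 <= k)%N -> 0 <= F k) -> F 0%N + F 1%N + F 2%N <= \sum_(k < m.+1) F k.
Proof.
move=> m_ge2 tail_ge0; have [l ->] : exists l, m = l.+2 by exists (m - 2)%N; lia.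
rewrite !big_ord_recl !addrA lerDl; apply: sumr_ge0 => k _; exact: tail_ge0.
Qed.

Lemma natr_bin2 (R : numFieldType) m : 'C(m, 2)%:R = m%:R * (m%:R - 1) / 2 :> R.
Proof.
case: m => [|m]; first by rewrite bin0n mul0r mul0r.
have := congr1 (fun k => k%:R : R) (mul_bin_diag m.+1 1).
by rewrite /= bin1 !natrM -natr1 addrK => ->; field.
Qed.

Lemma sum_binomial_mulk (R : comRingType) m (x : R) :
  \sum_(k < m.+2) 'C(m.+1, k)%:R * x ^+ k * k%:R = m.+1%:R * x * (x + 1) ^+ m.
Proof.
rewrite big_ord_recl /= mulr0 add0r exprD1n mulr_sumr; apply: eq_bigr => i _.
have := congr1 (fun k => k%:R : R) (mul_bin_diag m.+1 i).
rewrite /bump /= add1n !natrM -mulr_natl => E.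
transitivity (i.+1%:R * 'C(m.+1, i.+1)%:R * x ^+ i.+1); first by ring.
by rewrite -E exprS; ring.
Qed.

Section AlternatingBinomialSums.
Variable R : comRingType.

Lemma sum_alt_binomialS n (P : nat -> R) :
  \sum_(k < n.+2) (-1) ^+ k * 'C(n.+1, k)%:R * P k =
  \sum_(k < n.+1) (-1) ^+ k * 'C(n, k)%:R * (P k - P k.+1).
Proof.
set X := \sum_(k < n.+1) (-1) ^+ k * 'C(n, k)%:R * P k.
set Y := \sum_(k < n.+1) (-1) ^+ k * 'C(n, k)%:R * P k.+1.
set Z := \sum_(k < n.+1) (-1) ^+ k.+1 * 'C(n, k.+1)%:R * P k.+1.
have XE : X = P 0%N + Z.
  have <- : \sum_(k < n.+2) (-1) ^+ k * 'C(n, k)%:R * P k = X.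
    by rewrite big_ord_recr /= bin_small // mulr0 mul0r addr0.
  by rewrite big_ord_recl /= expr0 bin0 !mul1r.
have -> : \sum_(k < n.+1) (-1) ^+ k * 'C(n, k)%:R * (P k - P k.+1) = X - Y.
  by rewrite -sumrB; apply: eq_bigr => i _; ring.
rewrite big_ord_recl /= expr0 bin0 !mul1r XE.
have -> : \sum_(i < n.+1) (-1) ^+ bump 0 i * 'C(n.+1, bump 0 i)%:R * P (bump 0 i) = Z - Y.
  rewrite -sumrB; apply: eq_bigr => i _.
  by rewrite /bump /= add1n binS natrD exprS; ring.
ring.
Qed.

Lemma sum_alt_binomial_poch n j (a : R) : (j < n)%N ->
  \sum_(k < n.+1) (-1) ^+ k * 'C(n, k)%:R * poch (a + k%:R) j = 0.
Proof.
elim: n j a => [|n IHn] j a // ltjn; rewrite (sum_alt_binomialS n (fun k => poch (a + k%:R) j)).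
case: j ltjn => [|j] ltjn; first by rewrite big1 // => k _; rewrite !poch0 subrr mulr0.
have -> : \sum_(k < n.+1) (-1) ^+ k * 'C(n, k)%:R *
      (poch (a + k%:R) j.+1 - poch (a + k.+1%:R) j.+1) =
    - j.+1%:R * \sum_(k < n.+1) (-1) ^+ k * 'C(n, k)%:R * poch (a + 1 + k%:R) j.
  rewrite mulr_sumr; apply: eq_bigr => k _; rewrite pochSl pochS.
  have -> : a + k.+1%:R = a + 1 + k%:R by rewrite -natr1; ring.
  have -> : a + k%:R + 1 = a + 1 + k%:R by ring.
  by rewrite -natr1; ring.
by rewrite IHn // mulr0.
Qed.

End AlternatingBinomialSums.

Lemma monic_prod_roots (F : fieldType) (p : {poly F}) n (x : 'I_n -> F) :
  p \is monic -> size p = n.+1 -> injective x -> (forall i, root p (x i)) ->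
  p = \prod_(i < n) ('X - (x i)%:P).
Proof.
move=> monp sizep injx rootx.
rewrite [LHS](@all_roots_prod_XsubC _ _ [seq x i | i <- enum 'I_n]).
- by rewrite (monicP monp) scale1r big_map big_enum.
- by rewrite size_map size_enum_ord.
- by apply/allP => _ /mapP[i _ ->].
by rewrite uniq_rootsE map_inj_uniq ?enum_uniq.
Qed.

Lemma prod_sub_sign (R : realDomainType) n (x : nat -> R) y k : (k <= n)%N ->
  (forall i, (i < k)%N -> x i < y) -> (forall i, (k <= i < n)%N -> y < x i) ->
  0 < (-1) ^+ k * \prod_(i < n) (x i - y).
Proof.
move=> lekn below above; rewrite -(subnKC lekn) big_split_ord /= mulrA.
rewrite -[in (-1) ^+ k](card_ord k) -prodrN; apply: mulr_gt0; apply: prodr_gt0 => i _.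
  by rewrite opprB subr_gt0 below.
by rewrite subr_gt0 above //; have := ltn_ord i; lia.
Qed.

Lemma sorted_prod_sub_sign (R : realDomainType) n (x : nat -> R) y k :
  (forall i j, (i < j < n)%N -> x i < x j) -> (k <= n)%N ->
  ((0 < k)%N -> x k.-1 < y) -> ((k < n)%N -> y < x k) ->
  0 < (-1) ^+ k * \prod_(i < n) (x i - y).
Proof.
move=> x_incr lekn below above.
have x_le i j : (i <= j < n)%N -> x i <= x j.
  case/andP; rewrite leq_eqVlt => /orP[/eqP -> //| ltij ltjn].
  by apply/ltW/x_incr; rewrite ltij.
apply: prod_sub_sign => // i.
  by move=> ltik; apply: le_lt_trans (below _); [apply: x_le | ]; lia.
by move=> /andP[leki ltin]; apply: lt_le_trans (above _) _; [| apply: x_le]; lia.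
Qed.

Section BinomialSeries.
Variable R : realType.
Implicit Types (a c : R) (m N : nat).

Definition binomial_term a c m : R := poch a m * c ^+ m / (m`!)%:R.

Definition binomial_psum a c N : R := \sum_(m < N.+1) binomial_term a c m.

Lemma binomial_term0 a c : binomial_term a c 0 = 1.
Proof. by rewrite /binomial_term poch0 expr0 fact0 divr1 mulr1. Qed.

Lemma binomial_termS a c m :
  binomial_term a c m.+1 = binomial_term a c m * ((a + m%:R) * c / m.+1%:R).
Proof. by rewrite /binomial_term pochS exprS factS natrM invfM; ring. Qed.

Lemma binomial_termSl a c m :
  binomial_term a c m.+1 = binomial_term (a + 1) c m * (a * c / m.+1%:R).
Proof. by rewrite /binomial_term pochSl exprS factS natrM invfM; ring. Qed.

Lemma cvg_geometric_ratio (u : R^nat) (r : R) : 0 <= r < 1 ->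
  (\forall m \near \oo, `|u m.+1| <= r * `|u m|) -> u @ \oo --> 0.
Proof.
move=> /andP[r0 r1] [N _ ratioN].
have bound d : `|u (d + N)%N| <= `|u N| * r ^+ d.
  elim: d => [|d IHd]; first by rewrite add0n mulr1.
  rewrite addSn exprS mulrCA; apply: le_trans (ratioN _ (leq_addl _ _)) _.
  exact: ler_wpM2l.
have r_lt1 : `|r| < 1 by rewrite ger0_norm.
rewrite -(cvg_shiftn N).
have geo := cvg_geometric `|u N| r_lt1.
have ngeo : (fun d => - geometric `|u N| r d) @ \oo --> 0 by rewrite -oppr0; exact: cvgN.
apply: (squeeze_cvgr _ ngeo geo).
by near=> d; rewrite -ler_norml; exact: bound.
Unshelve. all: end_near. Qed.

Lemma cvg_binomial_term a c : `|c| < 1 -> binomial_term a c @ \oo --> 0.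
Proof.
move=> c_lt1; have c_ge0 := normr_ge0 c; have a_ge0 := normr_ge0 a.
apply: (@cvg_geometric_ratio _ ((1 + `|c|) / 2)); first by apply/andP; split; lra.
near=> m; rewrite binomial_termS normrM mulrC ler_wpM2r // !normrM normfV normr_nat.
rewrite ler_pdivrMr ?ltr0Sn // -[m.+1]addn1 natrD.
have aM : `|a + m%:R| <= `|a| + m%:R.
  by have := ler_normD a m%:R; rewrite normr_nat.
have large : 2 * `|a| * `|c| <= m%:R * (1 - `|c|).
  by rewrite -ler_pdivrMr ?subr_gt0 //; near: m; apply: nbhs_infty_ger.
have := ler_wpM2r c_ge0 aM; nra.
Unshelve. all: end_near. Qed.

Lemma binomial_psumS a c N :
  binomial_psum a c N.+1 = binomial_psum a c N + binomial_term a c N.+1.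
Proof. by rewrite /binomial_psum big_ord_recr. Qed.

Lemma binomial_psum_rec a c N :
  (1 - c) * binomial_psum (a + 1) c N =
  binomial_psum a c N - binomial_term (a + 1) c N * c.
Proof.
elim: N => [|N IHN].
  by rewrite /binomial_psum !big_ord1 !binomial_term0; ring.
rewrite !binomial_psumS mulrDr IHN (binomial_termS (a + 1)) binomial_termSl.
by rewrite -[N.+1]addn1 natrD; field; rewrite natr1 pnatr_eq0.
Qed.

(* The relation (1 - c)^(-a-i) = (1 - c)^-i (1 - c)^-a between sums of binomial series,
   stated without real powers and without summing the series. *)
Lemma cvg_binomial_psum_shift a c i : 0 < c < 1 ->
  (fun N => binomial_psum (a + i%:R) c N - (1 - c) ^- i * binomial_psum a c N)
    @ \oo --> 0.
Proof.
move=> /andP[c0 c1]; have c_lt1 : `|c| < 1 by rewrite ger0_norm ?ltW.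
have c1_neq0 : 1 - c != 0 by rewrite subr_eq0 eq_sym lt_eqF.
elim: i => [|i IHi].
  by under eq_fun do rewrite addr0 expr0 invr1 mul1r subrr; exact: cvg_cst.
rewrite -[X in _ --> X](subr0 0) -[X in _ --> X - _](mulr0 (1 - c)^-1).
rewrite -[X in _ --> _ - X](mulr0 ((1 - c)^-1 * c)).
apply: cvg_trans (cvgB (cvgMl_tmp IHi) (cvgMl_tmp (cvg_binomial_term _ c_lt1))).
apply: near_eq_cvg; apply: nearW => N; rewrite !fctE.
have := binomial_psum_rec (a + i%:R) c N; rewrite -natr1 addrA exprSr invfM => rec.
by rewrite -[binomial_psum (a + i%:R + 1) c N](mulKf c1_neq0) rec; ring.
Qed.

Lemma cvg_binomial_psum_shift_lag a c i k : 0 < c < 1 ->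
  (fun N => binomial_psum (a + i%:R) c (N - k) - (1 - c) ^- i * binomial_psum a c N)
    @ \oo --> 0.
Proof.
move=> c01; have c_lt1 : `|c| < 1 by case/andP: c01 => c0 c1; rewrite ger0_norm ?ltW.
elim: k => [|k IHk].
  by under eq_fun do rewrite subn0; exact: cvg_binomial_psum_shift.
have lag : [sequence binomial_term (a + i%:R) c (N - k)%N]_N @ \oo --> 0.
  by rewrite cvg_centern; exact: cvg_binomial_term.
rewrite -[X in _ --> X](subr0 0); apply: cvg_trans (cvgB IHk lag).
apply: near_eq_cvg; near=> N; rewrite !fctE /=.
have -> : (N - k = (N - k.+1).+1)%N by near: N; exists k.+1 => // N /= ?; lia.
by rewrite binomial_psumS; ring.
Unshelve. all: end_near. Qed.

End BinomialSeries.

Lemma sum_poch_opp_binomial_term (R : realType) (b c : R) k j N : (k <= N)%N ->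
  \sum_(m < N.+1) poch (- m%:R) k * poch (m%:R + b) j * binomial_term b c m =
  (-1) ^+ k * c ^+ k * poch b (k + j) * binomial_psum (b + (k + j)%:R) c (N - k).
Proof.
move=> leKN.
rewrite -(big_mkord xpredT (fun m => poch (- m%:R) k * poch (m%:R + b) j * binomial_term b c m)).
rewrite (@big_cat_nat _ _ _ k) //=; last by lia.
rewrite big_nat big1 ?add0r => [|m /andP[_ ltmk]]; last first.
  by rewrite poch_oppn ffact_small // mulr0 !mul0r.
rewrite -{1}(add0n k) big_addn subSn // big_mkord /binomial_psum mulr_sumr.
apply: eq_bigr => y _; rewrite /binomial_term poch_oppn.
have fact_y : ((y + k) ^_ k)%:R * (y`!)%:R = (y + k)`!%:R :> R.
  by rewrite -natrM -{2}(addnK k y) ffact_fact // leq_addl.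
have poch_y : poch b (y + k) * poch ((y + k)%:R + b) j = poch b (k + j) * poch (b + (k + j)%:R) y.
  by rewrite [_ + b]addrC -!pochD; congr poch; lia.
rewrite -fact_y exprD.
transitivity ((-1) ^+ k * c ^+ k * (poch b (y + k) * poch ((y + k)%:R + b) j) *
              (c ^+ y / (y`!)%:R)).
  by field; rewrite !pnatr_eq0 -!lt0n fact_gt0 ffact_gt0 leq_addl.
by rewrite poch_y; ring.
Qed.

Section PochhammerSpan.
Variables (R : comRingType) (b : R).

Definition poch_span d (g : R -> R) :=
  exists al : nat -> R, forall y, g y = \sum_(j < d.+1) al j * poch (y + b) j.

Lemma poch_span_mul d g (u v : R) :
  poch_span d g -> poch_span d.+1 (fun y => (u * y + v) * g y).
Proof.
move=> [al gE]; pose al0 j := if (j <= d)%N then al j else 0.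
exists (fun j => (if j is j'.+1 then u * al0 j' else 0) + (v - u * (b + j%:R)) * al0 j) => y.
under [RHS]eq_bigr => j _ do rewrite mulrDl.
rewrite big_split /= big_ord_recl mul0r add0r (big_ord_recr d.+1 (fun i => _ * al0 i * _)).
rewrite /= {3}/al0 ltnn mulr0 mul0r addr0 gE mulr_sumr -big_split.
apply: eq_bigr => -[j /= ltjd] _.
by rewrite /bump /= add1n /al0 -ltnS ltjd pochS; ring.
Qed.

Lemma poch_span_prod (s : seq R) : poch_span (size s) (fun y => \prod_(r <- s) (r - y)).
Proof.
elim: s => [|r s [al prodE]] /=.
  by exists (fun=> 1) => y; rewrite big_nil big_ord1 poch0 mulr1.
have [al' prodE'] := poch_span_mul (-1) r (ex_intro _ al prodE).
by exists al' => y; rewrite big_cons -prodE' mulN1r addrC.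
Qed.

End PochhammerSpan.

Section Meixner.
Variables (R : realType) (n : nat) (b c : R).
Hypotheses (poch_b_neq0 : forall k, poch b k != 0) (c_gt0 : 0 < c) (c_lt1 : c < 1).

Definition meixnerF (y : R) : R :=
  \sum_(k < n.+1) 'C(n, k)%:R * ((1 - c) / c) ^+ k * poch (- y) k / poch b k.

Lemma meixnerE y : meixner n b c y = (c / (c - 1)) ^+ n * poch b n * meixnerF y.
Proof.
rewrite /meixner /meixnerF; congr (_ * _); apply: eq_bigr => k _.
rewrite poch_oppn -bin_ffact natrM.
have -> : 1 - c^-1 = - ((1 - c) / c) by rewrite mulrBl mul1r divff ?gt_eqF // opprB.
rewrite (exprNn ((1 - c) / c)); set s := (-1) ^+ k.
have s2 : s * s = 1 by rewrite -exprMn mulrNN mulr1 expr1n.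
transitivity (s * s * ('C(n, k)%:R * ((1 - c) / c) ^+ k * poch (- y) k / poch b k)).
  by field; rewrite poch_b_neq0 pnatr_eq0 -lt0n fact_gt0.
by rewrite s2 mul1r.
Qed.

Definition meixner_moment (g : R -> R) N :=
  \sum_(m < N.+1) meixnerF m%:R * g m%:R * binomial_term b c m.

Lemma meixner_moment_poch j N : (n <= N)%N ->
  meixner_moment (fun y => poch (y + b) j) N =
  \sum_(k < n.+1) 'C(n, k)%:R * (-1) ^+ k * (1 - c) ^+ k * poch (b + k%:R) j *
                  binomial_psum (b + (k + j)%:R) c (N - k).
Proof.
move=> leNn; rewrite /meixner_moment /meixnerF.
under eq_bigr => m _ do rewrite mulr_suml mulr_suml.
rewrite exchange_big /=; apply: eq_bigr => -[k /= ltkn] _.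
set C := 'C(n, k)%:R * ((1 - c) / c) ^+ k / poch b k.
transitivity (C * \sum_(m < N.+1) poch (- m%:R) k * poch (m%:R + b) j * binomial_term b c m).
  by rewrite mulr_sumr; apply: eq_bigr => m _; rewrite /C; ring.
rewrite sum_poch_opp_binomial_term; last by lia.
rewrite /C pochD expr_div_n; field.
by rewrite poch_b_neq0 expf_neq0 // gt_eqF.
Qed.

Lemma cvg_meixner_moment_poch j : (j < n)%N ->
  meixner_moment (fun y => poch (y + b) j) @ \oo --> 0.
Proof.
move=> ltjn; have c1_neq0 : 1 - c != 0 by rewrite subr_eq0 eq_sym lt_eqF.
pose h k := 'C(n, k)%:R * (-1) ^+ k * (1 - c) ^+ k * poch (b + k%:R) j.
have h_null : \sum_(k < n.+1) h k * (1 - c) ^- (k + j) = 0.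
  transitivity ((1 - c) ^- j *
      \sum_(k < n.+1) (-1) ^+ k * 'C(n, k)%:R * poch (b + k%:R) j); last first.
    by rewrite sum_alt_binomial_poch // mulr0.
  rewrite mulr_sumr; apply: eq_bigr => k _; rewrite /h exprD invfM; field.
  by rewrite !expf_neq0.
have lim : (fun N => \sum_(k < n.+1) h k * (binomial_psum (b + (k + j)%:R) c (N - k) -
                     (1 - c) ^- (k + j) * binomial_psum b c N)) @ \oo --> \sum_(k < n.+1) h k * 0.
  apply: (@cvg_big _ _ +%R 0 _ add_continuous) => // k _.
  by apply: cvgMl_tmp; apply: cvg_binomial_psum_shift_lag; rewrite c_gt0.
rewrite big1 in lim; last by move=> k _; rewrite mulr0.
apply: cvg_trans _ lim; apply: near_eq_cvg; near=> N.
rewrite meixner_moment_poch; last by near: N; exact: nbhs_infty_ge.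
under [LHS]eq_bigr => k _ do rewrite mulrBr mulrA.
by rewrite sumrB -mulr_suml h_null mul0r subr0.
Unshelve. all: end_near. Qed.

Lemma cvg_meixner_moment d g : poch_span b d g -> (d < n)%N ->
  meixner_moment g @ \oo --> 0.
Proof.
move=> [al gE] ltdn.
have lim : (fun N => \sum_(j < d.+1) al j * meixner_moment (fun y => poch (y + b) j) N)
    @ \oo --> \sum_(j < d.+1) al j * 0.
  apply: (@cvg_big _ _ +%R 0 _ add_continuous) => // j _.
  by apply: cvgMl_tmp; apply: cvg_meixner_moment_poch; apply: leq_trans ltdn.
rewrite big1 in lim; last by move=> j _; rewrite mulr0.
apply: cvg_trans _ lim; apply: near_eq_cvg; apply: nearW => N.
rewrite /meixner_moment; under eq_bigr => j _ do rewrite mulr_sumr.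
rewrite exchange_big; apply: eq_bigr => m _.
by rewrite gE mulr_sumr mulr_suml; apply: eq_bigr => j _; ring.
Qed.

Lemma meixner_monic_poly : exists p : {poly R},
  [/\ p \is monic, size p = n.+1 & forall y, p.[y] = meixner n b c y].
Proof.
pose Q k : {poly R} := \prod_(i < k) ('X - (i%:R)%:P).
have monQ k : Q k \is monic by apply: monic_prod_XsubC.
have sizeQ k : size (Q k) = k.+1.
  by rewrite size_prod_XsubC /index_enum -enumT size_enum_ord.
have QE k y : poch (- y) k = (-1) ^+ k * (Q k).[y].
  rewrite horner_prod -[in (-1) ^+ k](card_ord k) -prodrN; apply: eq_bigr => i _.
  by rewrite hornerXsubC addrC opprB.
pose e k := (c / (c - 1)) ^+ n * poch b n * 'C(n, k)%:R * ((1 - c) / c) ^+ k / poch b k *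
            (-1) ^+ k.
have e_n : e n = 1.
  transitivity ((c / (c - 1) * ((1 - c) / c) * -1) ^+ n * (poch b n / poch b n)).
    by rewrite /e binn !exprMn; ring.
  have -> : c / (c - 1) * ((1 - c) / c) * -1 = 1.
    by field; rewrite subr_eq0 gt_eqF ?lt_eqF.
  by rewrite mulfV // expr1n mulr1.
pose rest := \sum_(k < n) e k *: Q k.
have size_rest : (size rest < n.+1)%N.
  rewrite ltnS; apply: leq_trans (size_sum _ _ _) _; apply/bigmax_leqP => k _.
  by apply: leq_trans (size_scale_leq _ _) _; rewrite sizeQ.
exists (Q n + rest); split.
- by rewrite monicE lead_coefDl ?sizeQ // (monicP (monQ n)).
- by rewrite size_polyDl sizeQ.
have -> : Q n + rest = \sum_(k < n.+1) e k *: Q k.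
  by rewrite big_ord_recr /= e_n scale1r addrC.
move=> y; rewrite meixnerE /meixnerF mulr_sumr horner_sum; apply: eq_bigr => k _.
by rewrite hornerZ QE /e; ring.
Qed.

Lemma meixner_prod_roots (x : 'I_n -> R) : injective x ->
  (forall i, meixner n b c (x i) = 0) ->
  forall y, meixner n b c y = \prod_(i < n) (y - x i).
Proof.
move=> injx rootx y; have [p [monp sizep pE]] := meixner_monic_poly.
rewrite -pE (monic_prod_roots monp sizep injx) => [|i]; last by rewrite /root pE rootx.
by rewrite horner_prod; apply: eq_bigr => i _; rewrite hornerXsubC.
Qed.

End Meixner.


Section MeixnerSign.
Variable R : realType.
Implicit Types (b c y : R).

Lemma poch_beta_neq0 b k : -2 < b < -1 -> poch b k != 0.
Proof.
move=> /andP[b_gt b_lt]; apply/prodf_neq0 => -[[|[|i]] _] _ /=; rewrite ?addr0.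
- by apply: ltr0_neq0; lra.
- by apply: ltr0_neq0; lra.
have i_ge0 : 0 <= i%:R :> R by [].
by rewrite -[i.+2]addn2 natrD; apply: lt0r_neq0; lra.
Qed.

Lemma poch_beta_gt0 b k : -2 < b < -1 -> (2 <= k)%N -> 0 < poch b k.
Proof.
move=> /andP[b_gt b_lt] le2k; rewrite -(subnKC le2k) pochD.
apply: mulr_gt0; last by apply: poch_gt0; lra.
by rewrite !pochS poch0 mul1r addr0 nmulr_rgt0; lra.
Qed.

Lemma meixnerF_ge_head n b c y : -2 < b < -1 -> 0 < c < 1 -> (2 <= n)%N ->
  (forall k, (3 <= k)%N -> 0 <= poch (- y) k) ->
  1 + n%:R * ((1 - c) / c) * - y / b +
  n%:R * (n%:R - 1) / 2 * ((1 - c) / c) ^+ 2 * (- y * (- y + 1)) / (b * (b + 1))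
  <= meixnerF n b c y.
Proof.
move=> hb /andP[c_gt0 c_lt1] le2n tail_ge0.
have := @sum_head3_le _
  (fun k => 'C(n, k)%:R * ((1 - c) / c) ^+ k * poch (- y) k / poch b k) n le2n.
rewrite /= bin0 bin1 natr_bin2 !pochS !poch0 expr0 expr1 invr1 !mul1r !addr0; apply=> k le3k.
apply: divr_ge0; last by apply/ltW/poch_beta_gt0; lia.
by apply: mulr_ge0 (tail_ge0 _ le3k); apply: mulr_ge0 => //; apply/exprn_ge0/divr_ge0; lra.
Qed.

Lemma meixner_head_gt0 (N U t b : R) : 3 <= N -> 0 < U -> 0 <= t -> -2 < b < -1 ->
  0 < 1 + N * U * t / b + N * (N - 1) / 2 * U ^+ 2 * (t * (t + 1)) / (b * (b + 1)).
Proof.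
move=> N_ge3 U_gt0 t_ge0 /andP[b_gt b_lt].
have bb_gt0 : 0 < b * (b + 1) by rewrite nmulr_rgt0; lra.
have v_ge0 : 0 <= N * U * t by rewrite !mulr_ge0 //; lra.
(* 3 (b (b+1) + v (b+1) + v^2/3) = (v + 3(b+1)/2)^2 + (b+1)(3b-9)/4 with v = N U t *)
have quad : 0 < b * (b + 1) + N * U * t * (b + 1) + (N * U * t) ^+ 2 / 3.
  have : 0 < (b + 1) * (3 * b - 9) by rewrite nmulr_rgt0; lra.
  have := sqr_ge0 (N * U * t + 3 * (b + 1) / 2); nra.
have : 0 <= N * (U * t) ^+ 2 * (N - 3) by rewrite !mulr_ge0 ?sqr_ge0 //; lra.
have : 0 <= N * (N - 1) * U ^+ 2 * t by rewrite !mulr_ge0 ?sqr_ge0 //; lra.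
have -> : 1 + N * U * t / b + N * (N - 1) / 2 * U ^+ 2 * (t * (t + 1)) / (b * (b + 1)) =
    (b * (b + 1) + N * U * t * (b + 1) + N * (N - 1) / 2 * U ^+ 2 * (t * (t + 1))) /
    (b * (b + 1)).
  by field; rewrite !ltr0_neq0 //; lra.
move=> ? ?; apply: divr_gt0 => //; nra.
Qed.

Lemma meixnerF_gt0_nonpos n b c y : -2 < b < -1 -> 0 < c < 1 -> (3 <= n)%N ->
  y <= 0 -> 0 < meixnerF n b c y.
Proof.
move=> hb hc le3n y_le0.
apply: lt_le_trans (meixnerF_ge_head hb hc (ltnW le3n) _); last first.
  by move=> k _; apply: poch_ge0; lra.
case/andP: hc => c_gt0 c_lt1; apply: meixner_head_gt0 => //; first by rewrite (ler_nat R 3).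
  by apply: divr_gt0; lra.
by lra.
Qed.

Lemma meixnerF_gt0_12 n b c y : -2 < b < -1 -> 0 < c < 1 -> (2 <= n)%N ->
  1 <= y <= 2 -> 0 < meixnerF n b c y.
Proof.
move=> hb hc le2n /andP[y_ge1 y_le2]; case/andP: (hb) => b_gt b_lt.
have poch2_ge0 : 0 <= - y * (- y + 1) by apply: mulr_le0; lra.
apply: lt_le_trans (meixnerF_ge_head hb hc le2n _); last first.
  move=> k le3k; rewrite -(@subnKC 2 k) ?(ltnW le3k) // pochD !pochS poch0 mul1r addr0.
  by apply: mulr_ge0 (poch_ge0 _ _); rewrite // -[2%:R]/2; lra.
case/andP: hc => c_gt0 c_lt1.
have U_ge0 : 0 <= (1 - c) / c by apply: divr_ge0; lra.
have yb_ge0 : 0 <= - y / b by apply: mulr_le0; rewrite ?invr_le0; lra.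
have lin_ge0 : 0 <= n%:R * ((1 - c) / c) * - y / b.
  by rewrite -mulrA; apply: mulr_ge0 => //; apply: mulr_ge0.
have quad_ge0 : 0 <= n%:R * (n%:R - 1) / 2 * ((1 - c) / c) ^+ 2 * (- y * (- y + 1)) / (b * (b + 1)).
  have n_ge2 : 2 <= n%:R :> R by rewrite (ler_nat R 2).
  apply: divr_ge0; last by apply/ltW; rewrite nmulr_rgt0; lra.
  apply: mulr_ge0 poch2_ge0; apply: mulr_ge0 (exprn_ge0 _ U_ge0).
  by apply: divr_ge0 => //; apply: mulr_ge0; lra.
lra.
Qed.

Lemma meixnerF_lt0 n b c : -2 < b < -1 -> 0 < c < 1 -> b / (c - 1) < n%:R ->
  meixnerF n b c (- b - 1) < 0.
Proof.
move=> hb /andP[c_gt0 c_lt1]; case/andP: (hb) => b_gt b_lt.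
have bc_gt0 : 0 < b / (c - 1) by rewrite -mulrNN -invrN; apply: divr_gt0; lra.
case: n => [|m] n_gt; first by rewrite ltNge ltW in n_gt.
set U := (1 - c) / c; have U_gt0 : 0 < U by apply: divr_gt0; lra.
have -> : meixnerF m.+1 b c (- b - 1) = (b * (U + 1) ^+ m.+1 + m.+1%:R * U * (U + 1) ^+ m) / b.
  rewrite -sum_binomial_mulk exprD1n mulr_sumr -big_split mulr_suml; apply: eq_bigr => k _.
  have poch_b1 : poch (b + 1) k = poch b k * (b + k%:R) / b.
    by have := pochSl b k; rewrite pochS => ->; field; apply: ltr0_neq0; lra.
  have -> : - (- b - 1) = b + 1 by ring.
  rewrite /= poch_b1 /U mulr_natl; field.
  by rewrite poch_beta_neq0 // ltr0_neq0 //; lra.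
have -> : b * (U + 1) ^+ m.+1 + m.+1%:R * U * (U + 1) ^+ m =
    (U + 1) ^+ m * ((b + m.+1%:R * (1 - c)) / c).
  by rewrite exprS /U; field; lra.
have key : 0 < b + m.+1%:R * (1 - c).
  have : 0 < (m.+1%:R - b / (c - 1)) * (1 - c) by apply: mulr_gt0; lra.
  by have -> : (m.+1%:R - b / (c - 1)) * (1 - c) = b + m.+1%:R * (1 - c) by field; lra.
rewrite nmulr_llt0 ?invr_lt0; last by lra.
by rewrite mulr_gt0 ?divr_gt0 ?exprn_gt0 //; lra.
Qed.

End MeixnerSign.

Section MeixnerZeros.
Variable R : realType.
Implicit Types (b c y : R).

Lemma meixner_prod_sub n b c (x : nat -> R) : -2 < b < -1 -> 0 < c < 1 -> (2 <= n)%N ->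
  (forall i j, (i < j < n)%N -> x i < x j) ->
  (forall i, (i < n)%N -> meixner n b c (x i) = 0) ->
  exists2 K, 0 < K & forall y, \prod_(i < n) (x i - y) = K * meixnerF n b c y.
Proof.
move=> hb /andP[c_gt0 c_lt1] le2n x_incr x_root.
exists ((c / (1 - c)) ^+ n * poch b n).
  by rewrite mulr_gt0 ?exprn_gt0 ?divr_gt0 ?poch_beta_gt0 //; lra.
have x_inj : injective (fun i : 'I_n => x i).
  move=> i j /= xij; apply/val_inj/eqP; apply: contraT; rewrite neq_ltn => /orP[] lt.
    by have := x_incr i j; rewrite lt ltn_ord xij ltxx => /(_ isT).
  by have := x_incr j i; rewrite lt ltn_ord xij ltxx => /(_ isT).
move=> y; have := meixner_prod_roots (fun k => poch_beta_neq0 k hb) c_gt0 c_lt1 x_inj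
  (fun i => x_root i (ltn_ord i)) y.
rewrite (meixnerE n (fun k => poch_beta_neq0 k hb) c_gt0) => prodE.
have -> : \prod_(i < n) (x i - y) = (-1) ^+ n * \prod_(i < n) (y - x i).
  by rewrite -[in (-1) ^+ n](card_ord n) -prodrN; apply: eq_bigr => i _; rewrite opprB.
have -> : c / (1 - c) = -1 * (c / (c - 1)) by field; rewrite !subr_eq0 lt_eqF // gt_eqF.
by rewrite -prodE [(-1 * _) ^+ n]exprMn; ring.
Qed.

Lemma meixnerF_sign_sorted n b c (x : nat -> R) y k :
  -2 < b < -1 -> 0 < c < 1 -> (2 <= n)%N ->
  (forall i j, (i < j < n)%N -> x i < x j) ->
  (forall i, (i < n)%N -> meixner n b c (x i) = 0) ->
  (k <= n)%N -> ((0 < k)%N -> x k.-1 < y) -> ((k < n)%N -> y < x k) ->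
  0 < (-1) ^+ k * meixnerF n b c y.
Proof.
move=> hb hc le2n x_incr x_root lekn below above.
have [K K_gt0 prodE] := meixner_prod_sub hb hc le2n x_incr x_root.
by have := sorted_prod_sub_sign x_incr lekn below above; rewrite prodE mulrCA pmulr_rgt0.
Qed.

Lemma meixner_zero_bounds n b c y : -2 < b < -1 -> 0 < c < 1 -> (3 <= n)%N ->
  b / (c - 1) < n%:R -> meixner n b c y = 0 -> [/\ 0 < y, y != - b - 1 & (1 <= y -> 2 < y)].
Proof.
move=> hb hc le3n n_gt; case/andP: (hc) => c_gt0 c_lt1.
have pref_neq0 : (c / (c - 1)) ^+ n * poch b n != 0.
  by rewrite mulf_neq0 ?poch_beta_neq0 // expf_neq0 // mulf_neq0 ?invr_eq0 ?subr_eq0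
             ?(gt_eqF c_gt0) ?(lt_eqF c_lt1).
rewrite (meixnerE n (fun k => poch_beta_neq0 k hb) c_gt0) => /eqP.
rewrite mulf_eq0 (negbTE pref_neq0) /= => /eqP F0; split.
- by rewrite ltNge; apply/negP => /(meixnerF_gt0_nonpos hb hc le3n); rewrite F0 ltxx.
- by apply/eqP => yE; have := meixnerF_lt0 hb hc n_gt; rewrite -yE F0 ltxx.
move=> y_ge1; rewrite ltNge; apply/negP => y_le2.
by have := meixnerF_gt0_12 hb hc (ltnW le3n) (introT andP (conj y_ge1 y_le2)); rewrite F0 ltxx.
Qed.

Lemma meixner_no_three_zeros_below1 n b c K (x : nat -> R) :
  -2 < b < -1 -> 0 < c < 1 -> (3 <= n)%N -> 0 < K ->
  (forall y, \prod_(i < n) (x i - y) = K * meixnerF n b c y) ->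
  (forall i, (i < n)%N -> 0 < x i) -> x 0%N < 1 -> x 1%N < 1 -> 1 <= x 2%N.
Proof.
move=> hb /andP[c_gt0 c_lt1] le3n K_gt0 prodE x_gt0 x0_lt1 x1_lt1.
rewrite leNgt; apply/negP => x2_lt1.
pose P y := \prod_(3 <= i < n) (x i - y).
(* q vanishes at m = 1, the only point where the weight binomial_term b c m is negative. *)
pose q y := (y - 1) * P y.
have q_span : poch_span b (n - 3).+1 q.
  have [al qE] := poch_span_mul 1 (-1) (poch_span_prod b [seq x i | i <- index_iota 3 n]).
  rewrite size_map size_iota in qE.
  by exists al => y; rewrite -qE /q /P big_map mul1r.
have deg_q : ((n - 3).+1 < n)%N by lia.
have moment_cvg := cvg_meixner_moment (fun k => poch_beta_neq0 k hb) c_gt0 c_lt1 q_span deg_q.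
have Fq y : K * (meixnerF n b c y * q y) =
    (x 0%N - y) * (x 1%N - y) * (x 2%N - y) * (y - 1) * P y ^+ 2.
  rewrite mulrA -prodE /q /P -(big_mkord xpredT (fun i => x i - y)).
  rewrite (@big_cat_nat _ _ _ 3) // big_mkord !big_ord_recr big_ord0 /= mul1r.
  by ring.
pose t m := meixnerF n b c m%:R * q m%:R * binomial_term b c m.
have t0_lt0 : t 0%N < 0.
  rewrite /t binomial_term0 mulr1 -(pmulr_rlt0 _ K_gt0) Fq !subr0 sub0r mulrN1.
  have P0_gt0 : 0 < P 0 by rewrite /P big_nat prodr_gt0 // => i /andP[_ /x_gt0]; rewrite subr0.
  by rewrite pmulr_llt0 ?exprn_gt0 // oppr_lt0 !mulr_gt0 // x_gt0 //; lia.
have t_le0 m : t m <= 0.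
  case: m => [|[|m]]; first exact: ltW.
    by rewrite /t /q subrr mul0r mulr0 mul0r.
  have w_gt0 : 0 < binomial_term b c m.+2.
    by rewrite /binomial_term divr_gt0 ?ltr0n ?fact_gt0 // mulr_gt0 ?exprn_gt0 ?poch_beta_gt0.
  rewrite /t pmulr_lle0 // -(pmulr_rle0 _ K_gt0) Fq.
  have m_ge2 : 2 <= m.+2%:R :> R by rewrite (ler_nat R 2).
  apply: mulr_le0_ge0 (sqr_ge0 _); apply: mulr_le0_ge0; last by lra.
  rewrite pmulr_rle0 ?nmulr_rgt0 //; lra.
have moment_le N : meixner_moment n b c q N <= t 0%N.
  by rewrite /meixner_moment big_ord_recl gerDl; apply: sumr_le0 => i _; exact: t_le0.
have eps_gt0 : 0 < - t 0%N by rewrite oppr_gt0.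
have [N _ smallN] := cvgr0_norm_lt _ moment_cvg _ eps_gt0.
have := smallN N (leqnn N); have := moment_le N.
by have := ler_norm (- meixner_moment n b c q N); rewrite normrN; lra.
Qed.

Lemma meixner_zero2_gt2 n b c (x : nat -> R) :
  -2 < b < -1 -> 0 < c < 1 -> (3 <= n)%N -> b / (c - 1) < n%:R ->
  (forall i j, (i < j < n)%N -> x i < x j) ->
  (forall i, (i < n)%N -> meixner n b c (x i) = 0) -> 2 < x 2%N.
Proof.
move=> hb hc le3n n_gt x_incr x_root.
have x_gt0 i : (i < n)%N -> 0 < x i.
  by move=> lt_in; case: (meixner_zero_bounds hb hc le3n n_gt (x_root i lt_in)).
have [_ _ x2_12] := meixner_zero_bounds hb hc le3n n_gt (x_root 2%N le3n).
have [K K_gt0 prodE] := meixner_prod_sub hb hc (ltnW le3n) x_incr x_root.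
apply: x2_12; have [x1_ge1 | x1_lt1] := leP 1 (x 1%N).
  exact: le_trans x1_ge1 (ltW (x_incr 1%N 2%N le3n)).
apply: (meixner_no_three_zeros_below1 hb hc le3n K_gt0 prodE x_gt0) => //.
exact: lt_trans (x_incr 0%N 1%N (ltnW le3n)) x1_lt1.
Qed.

Lemma meixner_zeros01 n b c (x : nat -> R) :
  -2 < b < -1 -> 0 < c < 1 -> (3 <= n)%N -> b / (c - 1) < n%:R ->
  (forall i j, (i < j < n)%N -> x i < x j) ->
  (forall i, (i < n)%N -> meixner n b c (x i) = 0) ->
  [/\ x 0%N < - b - 1, - b - 1 < x 1%N & x 1%N < 1].
Proof.
move=> hb hc le3n n_gt x_incr x_root; case/andP: (hb) => b_gt b_lt.
have sign := meixnerF_sign_sorted hb hc (ltnW le3n) x_incr x_root.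
have [_ x0_neq _] := meixner_zero_bounds hb hc le3n n_gt (x_root 0%N (ltnW (ltnW le3n))).
have [_ x1_neq x1_12] := meixner_zero_bounds hb hc le3n n_gt (x_root 1%N (ltnW le3n)).
have x2_gt2 := meixner_zero2_gt2 hb hc le3n n_gt x_incr x_root.
have F_lt0 := meixnerF_lt0 hb hc n_gt.
have F1_gt0 : 0 < meixnerF n b c 1.
  by apply: meixnerF_gt0_12 => //; [exact: ltnW | rewrite lexx /=; lra].
have x0_lt : x 0%N < - b - 1.
  rewrite ltNge le_eqVlt eq_sym (negbTE x0_neq) /=; apply/negP => x0_gt.
  suff : 0 < (-1) ^+ 0 * meixnerF n b c (- b - 1) by rewrite expr0 mul1r; lra.
  by apply: sign.
have x1_lt1 : x 1%N < 1.
  rewrite ltNge; apply/negP => /x1_12 x1_gt2.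
  suff : 0 < (-1) ^+ 1 * meixnerF n b c 1 by rewrite expr1 mulN1r oppr_gt0; lra.
  by apply: sign => [|_ /=|_]; [exact: leq_trans le3n | lra | lra].
split=> //; rewrite ltNge le_eqVlt (negbTE x1_neq) /=; apply/negP => x1_lt.
suff : 0 < (-1) ^+ 2 * meixnerF n b c (- b - 1) by rewrite expr2 mulrNN !mul1r; lra.
by apply: sign => [|_ /=|_]; [exact: ltnW | lra | lra].
Qed.

End MeixnerZeros.

Theorem lemma4p3 (R : realType) (beta c : R) (n : nat)
  (hb : -2 < beta < -1) (hc : 0 < c < 1) (hn : (3 <= n)%N)
  (hnb : beta / (c - 1) < n%:R)
  (x : nat -> R)
  (hinc : forall i j, (i < j < n)%N -> x i < x j)
  (hroot : forall i, (i < n)%N -> meixner n beta c (x i) = 0)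
  (hall : forall y : R, meixner n beta c y = 0 -> exists2 i, (i < n)%N & y = x i) :
  0 < x 0%N /\ x 0%N < - beta - 1 /\ - beta - 1 < x 1%N /\ x 1%N < 1 /\
  1 < - beta /\ - beta < 2 /\ 2 < x 2%N.
Proof.
have [x0_gt0 _ _] := meixner_zero_bounds hb hc hn hnb (hroot 0%N (ltnW (ltnW hn))).
have [x0_lt x1_gt x1_lt1] := meixner_zeros01 hb hc hn hnb hinc hroot.
have x2_gt2 := meixner_zero2_gt2 hb hc hn hnb hinc hroot.
by case/andP: hb => b_gt b_lt; split; lra.
Qed.
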